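(* Let $N\ge 1$ be an integer and let $q,c,d$ be complex numbers with $q\neq 0$. Then the $N+1$ polynomials $\big(h_k(x;c)\,h_{N-k}(x;d)\big)_{k=0}^N$ form a basis of the space of polynomials in $x$ of degree at most $N$ if and only if none of the following holds: (i) $c,d\neq 0$ and $c/d\in\{q^{1-N},q^{2-N},\dots,q^{N-1}\}$; (ii) $cd\in\{q^{1-N},q^{2-N},\dots,q^{-1},1\}$; (iii) $c=d=0$.
   Context: For a complex number $a$ and integer $k\ge 0$, the Askey–Wilson monomial is the polynomial $h_k(x;a)=h_k(x;a;q)=\prod_{j=0}^{k-1}(1-axq^j+a^2q^{2j})$ (empty product $=1$). Equivalently, if $\xi+\xi^{-1}=x$, then $h_k(x;a)=(a\xi;q)_k(a\xi^{-1};q)_k$, where $(a;q)_k=\prod_{j=0}^{k-1}(1-aq^j)$. *)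

From HB Require Import structures.
From mathcomp Require Import all_boot all_order all_algebra.
From mathcomp Require Import complex.
From mathcomp Require Import reals.
Set Implicit Arguments. Unset Strict Implicit. Unset Printing Implicit Defensive.
Import Order.TTheory GRing.Theory Num.Theory.
Local Open Scope ring_scope.

Definition aw_monomial (R : realType) (q a : R[i]) (k : nat) : {poly R[i]} :=
  \prod_(j < k) (1 - (a * q ^+ j) *: 'X + (a ^+ 2 * q ^+ (2 * j))%:P).

Definition is_basis_poly_deg_le (F : fieldType) (N : nat)
    (P : 'I_N.+1 -> {poly F}) : Prop :=
  [/\ forall k, (size (P k) <= N.+1)%N,
      forall a : 'I_N.+1 -> F, \sum_(k < N.+1) a k *: P k = 0 -> forall k, a k = 0
    & forall p : {poly F}, (size p <= N.+1)%N ->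
        exists a : 'I_N.+1 -> F, p = \sum_(k < N.+1) a k *: P k].

From HB Require Import structures.
From mathcomp Require Import all_boot all_order all_algebra.
From mathcomp Require Import complex.
From mathcomp Require Import reals.
From mathcomp Require Import ring zify.
Import Order.TTheory GRing.Theory Num.Theory.
Local Open Scope ring_scope.
Set Implicit Arguments. Unset Strict Implicit. Unset Printing Implicit Defensive.

(* Write F_N for the family (h_k(x;c) h_(N-k)(x;d))_(k <= N). Comparing the
   last factors of neighbouring members of F_(N+1) gives, for k <= N,
     d q^(N-k) F_(N+1,k+1) - c q^k F_(N+1,k) = lambda_(N,k) F_(N,k),
     lambda_(N,k) = (d q^(N-k) - c q^k) (1 - c d q^N).
   If F_N is a basis and no lambda_(N,k) vanishes, the span of F_(N+1)
   contains every polynomial of degree <= N and one of exact degree N+1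
   (F_(N+1,N+1) if c <> 0, F_(N+1,0) if d <> 0), so F_(N+1) is a basis.
   Conversely, freeness of F_(N+1) forbids lambda_(N,k) = 0 and, the identity
   being bidiagonal, passes to F_N. So F_N is a basis iff lambda_(M,k) <> 0 for
   all k <= M < N, and the vanishing of some such lambda_(M,k) is exactly one
   of the conditions (i)-(iii). *)

Section PolyFamilies.
Variable F : fieldType.
Implicit Types (n : nat) (G g : nat -> {poly F}) (a : nat -> F) (p : {poly F}).

Definition in_span n G p := exists a, p = \sum_(k < n) a k *: G k.

Definition spans_polys n G := forall p, (size p <= n)%N -> in_span n G p.

Definition lin_indep n G :=
  forall a, \sum_(k < n) a k *: G k = 0 -> forall k, (k < n)%N -> a k = 0.

Lemma sum_scale_delta {n} G {i} x : (i < n)%N ->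
  \sum_(k < n) (if k == i :> nat then x else 0) *: G k = x *: G i.
Proof.
move=> lt_in; have := big_ord1_eq +%R (fun k => x *: G k) i n; rewrite lt_in => <-.
rewrite [RHS]big_mkcond /=.
by apply: eq_bigr => k _; case: eqP; rewrite ?scale0r.
Qed.

Lemma in_span_gen n G i : (i < n)%N -> in_span n G (G i).
Proof.
by move=> lt_in; exists (fun k => if k == i then 1 else 0); rewrite sum_scale_delta ?scale1r.
Qed.

Lemma in_spanD n G p r : in_span n G p -> in_span n G r -> in_span n G (p + r).
Proof.
move=> [a ->] [b ->]; exists (fun k => a k + b k).
by rewrite -big_split; apply: eq_bigr => k _; rewrite scalerDl.
Qed.

Lemma in_spanZ n G x p : in_span n G p -> in_span n G (x *: p).
Proof.
move=> [a ->]; exists (fun k => x * a k).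
by rewrite scaler_sumr; apply: eq_bigr => k _; rewrite scalerA.
Qed.

Lemma in_span_sum n m G (P : nat -> {poly F}) :
  (forall k, (k < m)%N -> in_span n G (P k)) -> in_span n G (\sum_(k < m) P k).
Proof.
move=> spanP; elim/big_ind: _ => [||k _]; last exact: spanP.
- by exists (fun=> 0); rewrite big1 // => k _; rewrite scale0r.
- exact: in_spanD.
Qed.

Lemma lin_indep_pair n G i j x y : lin_indep n G -> (i < n)%N -> (j < n)%N ->
  i != j -> x *: G i + y *: G j = 0 -> x = 0 /\ y = 0.
Proof.
move=> indepG lt_in lt_jn neq_ij comb0.
pose a k := (if k == i then x else 0) + (if k == j then y else 0).
have /indepG a0 : \sum_(k < n) a k *: G k = 0.
  apply: etrans comb0; rewrite -(sum_scale_delta G x lt_in).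
  rewrite -(sum_scale_delta G y lt_jn) -big_split.
  by apply: eq_bigr => k _; rewrite scalerDl.
move: (a0 i lt_in) (a0 j lt_jn); rewrite /a !eqxx (negbTE neq_ij) eq_sym.
by rewrite (negbTE neq_ij) addr0 add0r.
Qed.

Lemma lin_indep_bidiag n G g (u v w : nat -> F) :
  (forall k, (k < n)%N -> w k *: g k = u k *: G k.+1 - v k *: G k) ->
  (forall k, (k < n)%N -> w k != 0) ->
  (forall k, (k < n)%N -> u k != 0) \/ (forall k, (k < n)%N -> v k != 0) ->
  lin_indep n.+1 G -> lin_indep n g.
Proof.
(* The coefficients e of a vanishing combination of the g k satisfy
   e_(j-1) u_(j-1) = e_j v_j (with e_(-1) = e_n = 0), which kills them from below
   when v does not vanish and from above when u does not. *)
move=> def_g w_neq0 uv_neq0 indepG a comb0.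
pose e j := if (j < n)%N then a j / w j else 0.
pose b j := (if j is i.+1 then e i * u i else 0) - e j * v j.
have e_n : e n = 0 by rewrite /e ltnn.
have a_e k : (k < n)%N -> a k = e k * w k.
  by move=> lt_kn; rewrite /e lt_kn divfK // w_neq0.
have /indepG b0 : \sum_(j < n.+1) b j *: G j = 0.
  rewrite -[RHS]comb0; under [RHS]eq_bigr => k _ do
    rewrite a_e // -scalerA def_g // scalerBr !scalerA.
  under [LHS]eq_bigr do rewrite scalerBl.
  rewrite !sumrB big_ord_recl big_ord_recr /= scale0r add0r.
  by rewrite e_n mul0r scale0r addr0.
have e_rec j : (j < n)%N -> e j * u j = e j.+1 * v j.+1.
  by move=> lt_jn; apply: subr0_eq; exact: (b0 j.+1 lt_jn).
have e0 k : (k < n)%N -> e k = 0.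
  case: uv_neq0 => [u_neq0 | v_neq0].
    suff e_top m : e (n - m)%N = 0 by move=> lt_kn; rewrite -(subKn (ltnW lt_kn)).
    elim: m => [|m IH]; first by rewrite subn0.
    have [le_nm | lt_mn] := leqP n m; first by rewrite (_ : n - m.+1 = n - m)%N //; lia.
    have lt_jn : (n - m.+1 < n)%N by lia.
    apply: (mulIf (u_neq0 _ lt_jn)); rewrite mul0r e_rec //.
    by rewrite (_ : (n - m.+1).+1 = n - m)%N ?IH ?mul0r //; lia.
  elim: k => [|k IH] lt_kn; apply: (mulIf (v_neq0 _ lt_kn)); rewrite mul0r.
    by apply/eqP; rewrite -oppr_eq0 -sub0r; apply/eqP; exact: (b0 0%N isT).
  by rewrite -e_rec ?IH ?mul0r // ltnW.
by move=> k lt_kn; rewrite a_e // e0 // mul0r.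
Qed.

Lemma spans_polys_step n G g j :
  spans_polys n g -> (forall k, (k < n)%N -> in_span n.+1 G (g k)) ->
  (j <= n)%N -> size (G j) = n.+1 -> spans_polys n.+1 G.
Proof.
move=> span_g g_in le_jn size_Gj p size_p.
have lc_neq0 : lead_coef (G j) != 0.
  by rewrite lead_coef_eq0 -size_poly_eq0 size_Gj.
pose r := p - (p`_n / lead_coef (G j)) *: G j.
have size_r : (size r <= n)%N.
  apply/leq_sizeP => i le_ni; rewrite coefB coefZ.
  case: (ltngtP n i) le_ni => // [lt_ni|<-] _.
    rewrite [p`_i]nth_default ?[(G j)`_i]nth_default ?size_Gj ?mulr0 ?subr0 //.
    exact: leq_trans size_p lt_ni.
  by rewrite (_ : (G j)`_n = lead_coef (G j)) ?divfK ?subrr // lead_coefE size_Gj.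
have [b def_r] := span_g r size_r.
rewrite -(subrK ((p`_n / lead_coef (G j)) *: G j) p) -/r def_r.
apply: in_spanD; last by apply: in_spanZ; apply: in_span_gen; rewrite ltnS.
apply: (in_span_sum (P := fun k => b k *: g k)) => k lt_kn.
by apply: in_spanZ; apply: g_in.
Qed.

Definition coefmx n G : 'M[F]_n := \matrix_(i, j) (G i)`_j.

Lemma coef_comb_mx n G a (j : 'I_n) :
  (\sum_(k < n) a k *: G k)`_j = (\row_(k < n) a k *m coefmx n G) 0 j.
Proof. by rewrite coef_sum !mxE; apply: eq_bigr => k _; rewrite coefZ !mxE. Qed.

Definition coefs_of_row n (v : 'rV[F]_n) (k : nat) : F :=
  if insub k is Some i then v 0 i else 0.

Lemma coefs_of_rowE n (v : 'rV[F]_n) (k : 'I_n) : coefs_of_row v k = v 0 k.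
Proof. by rewrite /coefs_of_row valK. Qed.

Lemma row_coefs_of_row n (v : 'rV[F]_n) : \row_(k < n) coefs_of_row v k = v.
Proof. by apply/matrixP => i k; rewrite ord1 mxE coefs_of_rowE. Qed.

Section SquareFamily.
Variables (n : nat) (G : nat -> {poly F}).
Hypothesis size_G : forall k, (k < n)%N -> (size (G k) <= n)%N.

Lemma size_comb_leq a : (size (\sum_(k < n) a k *: G k)%R <= n)%N.
Proof.
apply: (big_ind (fun p => size p <= n)%N) => [|p r|k _]; first by rewrite size_poly0.
  by move=> size_p size_r; rewrite (leq_trans (size_polyD _ _)) // geq_max size_p.
by rewrite (leq_trans (size_scale_leq _ _)) ?size_G.
Qed.

Lemma eq_poly_coefmx p a : (size p <= n)%N ->
  (forall j : 'I_n, p`_j = (\row_(k < n) a k *m coefmx n G) 0 j) ->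
  p = \sum_(k < n) a k *: G k.
Proof.
move=> size_p coef_p; apply/polyP => i; case: (ltnP i n) => [lt_in | le_ni].
  by rewrite (coef_p (Ordinal lt_in)) (coef_comb_mx _ _ (Ordinal lt_in)).
by rewrite !(leq_sizeP _ _ _ _ le_ni) // size_comb_leq.
Qed.

Lemma lin_indep_unitmx : lin_indep n G <-> coefmx n G \in unitmx.
Proof.
split=> [indepG | unitG a comb0 k lt_kn].
  rewrite unitmxE unitfE; apply/det0P => -[v /eqP v_neq0 v0]; apply: v_neq0.
  have comb0 : \sum_(k < n) coefs_of_row v k *: G k = 0.
    apply/esym/eq_poly_coefmx => [|j]; first by rewrite size_poly0.
    by rewrite row_coefs_of_row v0 coef0 mxE.
  rewrite -(row_coefs_of_row v); apply/matrixP => i k; rewrite !mxE.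
  exact: indepG comb0 _ (ltn_ord k).
have /matrixP/(_ 0 (Ordinal lt_kn)) : \row_(k < n) a k = 0.
  apply: (row_free_inj (A := coefmx n G)); first by rewrite row_free_unit.
  by apply/matrixP => i j; rewrite ord1 mul0mx [RHS]mxE -coef_comb_mx comb0 coef0.
by rewrite !mxE.
Qed.

Lemma spans_polys_unitmx : spans_polys n G <-> coefmx n G \in unitmx.
Proof.
split=> [spanG | unitG p size_p].
  rewrite -row_full_unit; apply/row_fullP.
  have /fin_all_exists [A def_A] (i : 'I_n) : in_span n G 'X^i.
    by apply: spanG; rewrite size_polyXn.
  exists (\matrix_(i, k) A i k); apply/matrixP => i j.
  have -> : (\matrix_(i, k) A i k *m coefmx n G) i j = (\row_k A i k *m coefmx n G) 0 j.
    by rewrite !mxE; apply: eq_bigr => k _; rewrite !mxE.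
  by rewrite -coef_comb_mx -def_A coefXn mxE eq_sym.
pose w := \row_(j < n) p`_j *m invmx (coefmx n G).
exists (coefs_of_row w); apply: eq_poly_coefmx => // j.
by rewrite row_coefs_of_row mulmxKV // mxE.
Qed.

Lemma lin_indep_spans : lin_indep n G <-> spans_polys n G.
Proof. by rewrite lin_indep_unitmx spans_polys_unitmx. Qed.

End SquareFamily.

Lemma is_basis_lin_indep N G :
  (forall k, (k < N.+1)%N -> (size (G k) <= N.+1)%N) ->
  is_basis_poly_deg_le (fun k : 'I_N.+1 => G k) <-> lin_indep N.+1 G.
Proof.
move=> size_G; split=> [[_ indepG _] a comb0 k lt_kN | indepG].
  exact: (indepG (fun k => a k) comb0 (Ordinal lt_kN)).
split=> [k | a comb0 k | p size_p]; first exact: size_G.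
  have := indepG (coefs_of_row (\row_i a i)) _ k (ltn_ord k).
  rewrite coefs_of_rowE mxE; apply; apply: etrans comb0.
  by apply: eq_bigr => i _; rewrite coefs_of_rowE mxE.
have [a ->] := (lin_indep_spans size_G).1 indepG p size_p.
by exists (fun k => a k).
Qed.

End PolyFamilies.

Section AskeyWilson.
Variables (F : fieldType) (q : F).
Hypothesis q_neq0 : q != 0.
Implicit Types (a c d : F) (j k N : nat).

(* Over R[i], [aw_mono q a k] is [aw_monomial q a k]. *)
Definition aw_factor a j : {poly F} :=
  1 - (a * q ^+ j) *: 'X + (a ^+ 2 * q ^+ (2 * j))%:P.

Definition aw_mono a k : {poly F} := \prod_(j < k) aw_factor a j.

Definition aw_family c d N k := aw_mono c k * aw_mono d (N - k).

Definition aw_lambda c d N k :=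
  (d * q ^+ (N - k) - c * q ^+ k) * (1 - c * d * q ^+ N).

Lemma aw_mono0 a : aw_mono a 0 = 1.
Proof. by rewrite /aw_mono big_ord0. Qed.

Lemma aw_monoS a k : aw_mono a k.+1 = aw_mono a k * aw_factor a k.
Proof. by rewrite /aw_mono big_ord_recr. Qed.

Lemma aw_mono0n k : aw_mono 0 k = 1.
Proof.
rewrite /aw_mono big1 // => j _.
by rewrite /aw_factor !mul0r scale0r subr0 expr0n mul0r addr0.
Qed.

Lemma size_aw_factor a j : a != 0 -> size (aw_factor a j) = 2%N.
Proof.
move=> a_neq0.
have -> : aw_factor a j = (- (a * q ^+ j))%:P * 'X + (1 + a ^+ 2 * q ^+ (2 * j))%:P.
  by rewrite /aw_factor -mul_polyC polyCN polyCD polyC1; ring.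
have lead_neq0 : - (a * q ^+ j) != 0 by rewrite oppr_eq0 mulf_neq0 ?expf_neq0.
by rewrite size_MXaddC polyC_eq0 (negbTE lead_neq0) size_polyC lead_neq0.
Qed.

Lemma size_aw_mono a k : a != 0 -> size (aw_mono a k) = k.+1.
Proof.
move=> a_neq0; elim: k => [|k IH]; first by rewrite aw_mono0 size_poly1.
have factor_neq0 : aw_factor a k != 0 by rewrite -size_poly_gt0 size_aw_factor.
have mono_neq0 : aw_mono a k != 0 by rewrite -size_poly_gt0 IH.
by rewrite aw_monoS size_mul // IH size_aw_factor // addn2.
Qed.

Lemma size_aw_mono_leq a k : (size (aw_mono a k) <= k.+1)%N.
Proof.
have [->|a_neq0] := eqVneq a 0; first by rewrite aw_mono0n size_poly1.
by rewrite size_aw_mono.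
Qed.

Lemma size_aw_family_leq c d N k :
  (k <= N)%N -> (size (aw_family c d N k) <= N.+1)%N.
Proof.
move=> le_kN; rewrite (leq_trans (size_polyMleq _ _)) //.
have := size_aw_mono_leq c k; have := size_aw_mono_leq d (N - k); lia.
Qed.

Lemma aw_factor_comb c d i j :
  (d * q ^+ j) *: aw_factor c i - (c * q ^+ i) *: aw_factor d j
  = ((d * q ^+ j - c * q ^+ i) * (1 - c * d * q ^+ (i + j)))%:P.
Proof.
rewrite /aw_factor exprD !(mulnC 2) !exprM -!mul_polyC.
rewrite !(polyCM, polyCB, polyCD, polyC1, rmorphXn).
ring.
Qed.

Lemma aw_family_comb c d N k : (k <= N)%N ->
  (d * q ^+ (N - k)) *: aw_family c d N.+1 k.+1 - (c * q ^+ k) *: aw_family c d N.+1 k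
  = aw_lambda c d N k *: aw_family c d N k.
Proof.
move=> le_kN; rewrite /aw_family /aw_lambda subSS subSn // !aw_monoS.
rewrite -[in q ^+ N](subnKC le_kN) -[RHS]mul_polyC -aw_factor_comb -!mul_polyC.
ring.
Qed.

Lemma lin_indep_aw_family0 c d : lin_indep 1 (aw_family c d 0).
Proof.
move=> a; rewrite big_ord1 /aw_family !aw_mono0 mulr1 => /eqP.
by rewrite scaler_eq0 oner_eq0 orbF => /eqP a0 [].
Qed.

Lemma lin_indep_aw_family_lambda c d N :
  lin_indep N.+2 (aw_family c d N.+1) -> (c != 0) || (d != 0) /\
  forall k, (k <= N)%N -> aw_lambda c d N k != 0.
Proof.
move=> indep1; have cd_neq0 : (c != 0) || (d != 0).
  apply: contraT; rewrite negb_or !negbK => /andP[/eqP c0 /eqP d0].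
  have := @lin_indep_pair _ _ _ 1 0 1 (-1) indep1 isT isT isT.
  rewrite /aw_family c0 d0 !aw_mono0n mulr1 scale1r scaleN1r subrr => /(_ erefl).
  by case=> /eqP; rewrite oner_eq0.
split=> // k le_kN; apply/eqP => lambda0.
have := aw_family_comb c d le_kN; rewrite lambda0 scale0r -scaleNr => comb0.
have [||| /eqP u0 /eqP v0] := lin_indep_pair indep1 _ _ _ comb0; try lia.
move: cd_neq0 u0 v0; rewrite oppr_eq0 !mulf_eq0 !expf_eq0 (negbTE q_neq0) !andbF !orbF.
by case/orP=> /negbTE ->.
Qed.

Lemma lin_indep_aw_familyS c d N :
  lin_indep N.+2 (aw_family c d N.+1) <->
  lin_indep N.+1 (aw_family c d N) /\ forall k, (k <= N)%N -> aw_lambda c d N k != 0.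
Proof.
have size_fam M k : (k < M.+1)%N -> (size (aw_family c d M k) <= M.+1)%N.
  by move=> lt_kM; apply: size_aw_family_leq.
split=> [indep1 | [indep0 lambda_neq0]].
  have [cd_neq0 lambda_neq0] := lin_indep_aw_family_lambda indep1.
  split=> //; apply: (lin_indep_bidiag (u := fun k => d * q ^+ (N - k))
    (v := fun k => c * q ^+ k) (w := aw_lambda c d N)) indep1 => [k lt_kN|k lt_kN|].
  - by rewrite aw_family_comb.
  - exact: lambda_neq0.
  - by case/orP: cd_neq0 => [c_neq0|d_neq0]; [right|left] => k _;
      rewrite mulf_neq0 ?expf_neq0.
have size_top : exists2 j, (j <= N.+1)%N & size (aw_family c d N.+1 j) = N.+2.
  have: (c != 0) || (d != 0).
    apply: contraTT (lambda_neq0 0%N isT); rewrite negb_or !negbK => /andP[/eqP-> /eqP->].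
    by rewrite /aw_lambda !mul0r subrr mul0r.
  case/orP=> [c_neq0|d_neq0].
    by exists N.+1; rewrite // /aw_family subnn aw_mono0 mulr1 size_aw_mono.
  by exists 0%N; rewrite // /aw_family subn0 aw_mono0 mul1r size_aw_mono.
have [j le_jN size_j] := size_top.
apply/(lin_indep_spans (size_fam _)).
apply: (spans_polys_step (g := aw_family c d N)) le_jN size_j.
  exact/(lin_indep_spans (size_fam _)).
move=> k lt_kN; rewrite -[aw_family c d N k](scalerK (lambda_neq0 k lt_kN)).
rewrite -aw_family_comb // -scaleNr.
by apply/in_spanZ/in_spanD; apply/in_spanZ/in_span_gen; lia.
Qed.

Lemma lin_indep_aw_family c d N :
  lin_indep N.+1 (aw_family c d N) <->
  forall M k, (k <= M < N)%N -> aw_lambda c d M k != 0.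
Proof.
elim: N => [|N IH].
  by split=> [_ M k /andP[_] // | _]; apply: lin_indep_aw_family0.
rewrite lin_indep_aw_familyS IH; split=> [[lambda_lt lambda_N] M k | lambda_le].
  move=> /andP[le_kM]; rewrite ltnS leq_eqVlt => /orP[/eqP eq_MN | lt_MN].
    by rewrite eq_MN in le_kM *; apply: lambda_N.
  by apply: lambda_lt; rewrite le_kM.
split=> [M k /andP[le_kM lt_MN] | k le_kN]; apply: lambda_le.
  by rewrite le_kM ltnW.
by rewrite le_kN ltnSn.
Qed.

Lemma ratio_qpow_range c d N : c != 0 -> d != 0 ->
  (exists M k, (k <= M < N)%N /\ d * q ^+ (M - k) = c * q ^+ k) <->
  exists i : int, (1 - N%:Z <= i <= N%:Z - 1) /\ c / d = q ^ i.
Proof.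
move=> c_neq0 d_neq0; have qX_neq0 n : q ^+ n != 0 by rewrite expf_neq0.
split=> [[M [k [/andP[le_kM lt_MN] eq_dc]]] | [[m|m] [bounds eq_cd]]].
- exists ((M - k)%:Z - k%:Z); split; first by apply/andP; split; lia.
  rewrite expfzDr // -exprnP -exprnN -[c](mulfK (qX_neq0 k)) -eq_dc.
  by field; rewrite ?qX_neq0.
- exists m, 0%N; split; first by apply/andP; split; lia.
  by rewrite subn0 expr0 mulr1 exprnP -eq_cd mulrC divfK.
- exists m.+1, m.+1; split; first by apply/andP; split; lia.
  rewrite subnn expr0 mulr1 -[c](divfK d_neq0) eq_cd /=.
  by rewrite mulrAC mulVf ?mul1r.
Qed.

Lemma product_qpow_range c d N :
  (exists M, (M < N)%N /\ c * d * q ^+ M = 1) <->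
  exists i : int, (1 - N%:Z <= i <= 0) /\ c * d = q ^ i.
Proof.
have qX_neq0 n : q ^+ n != 0 by rewrite expf_neq0.
split=> [[M [lt_MN eq_cd]] | [[m|m] [bounds eq_cd]]].
- exists (- M%:Z); split; first by apply/andP; split; lia.
  by rewrite -exprnN; apply: (mulIf (qX_neq0 M)); rewrite mulVf.
- exists 0%N; split; first lia.
  by rewrite mulr1 eq_cd (_ : m = 0%N) //; lia.
- exists m.+1; split; first lia.
  by rewrite eq_cd mulVf.
Qed.

Lemma all_aw_lambda_neq0 c d N : (1 <= N)%N ->
  (forall M k, (k <= M < N)%N -> aw_lambda c d M k != 0) <->
  ~ ( (c != 0 /\ d != 0 /\
        exists i : int, (1 - N%:Z <= i <= N%:Z - 1) /\ c / d = q ^ i)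
    \/ (exists i : int, (1 - N%:Z <= i <= 0) /\ c * d = q ^ i)
    \/ (c = 0 /\ d = 0) ).
Proof.
move=> N_gt0; split=> [lambda_neq0 | no_root M k le_kMN].
  case=> [[c_neq0 [d_neq0 /(ratio_qpow_range _ c_neq0 d_neq0)]]
         | [/product_qpow_range | [c0 d0]]].
  - case=> M [k [le_kMN eq_dc]]; move: (lambda_neq0 M k le_kMN).
    by rewrite /aw_lambda eq_dc subrr mul0r eqxx.
  - case=> M [lt_MN eq_cd]; move: (lambda_neq0 M 0%N (ltac:(lia))).
    by rewrite /aw_lambda eq_cd subrr mulr0 eqxx.
  - move: (lambda_neq0 0%N 0%N (ltac:(lia))).
    by rewrite /aw_lambda c0 d0 !mul0r subrr mul0r eqxx.
rewrite /aw_lambda mulf_neq0 // subr_eq0; apply/eqP => root; apply: no_root.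
  have [c0|c_neq0] := eqVneq c 0.
    do 2!right; split=> //; move: root; rewrite c0 mul0r => /eqP.
    by rewrite mulf_eq0 expf_eq0 (negbTE q_neq0) andbF orbF => /eqP.
  have [d0|d_neq0] := eqVneq d 0.
    move: root; rewrite d0 mul0r => /esym/eqP.
    by rewrite mulf_eq0 expf_eq0 (negbTE q_neq0) andbF orbF (negbTE c_neq0).
  by left; split=> //; split=> //; apply/ratio_qpow_range => //; exists M, k.
right; left; apply/product_qpow_range.
by exists M; case/andP: le_kMN => _ ->; rewrite root.
Qed.

End AskeyWilson.

Theorem mainTheorem1 (R : realType) (N : nat) (q c d : R[i]) :
  (1 <= N)%N -> q != 0 ->
  is_basis_poly_deg_le
    (fun k : 'I_N.+1 => aw_monomial q c k * aw_monomial q d (N - k)) <->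
  ~ ( (c != 0 /\ d != 0 /\
        exists i : int, (1 - N%:Z <= i <= N%:Z - 1)%R /\ c / d = q ^ i)
    \/ (exists i : int, (1 - N%:Z <= i <= 0)%R /\ c * d = q ^ i)
    \/ (c = 0 /\ d = 0) ).
Proof.
move=> N_gt0 q_neq0.
rewrite -(all_aw_lambda_neq0 q_neq0 c d N_gt0) -(lin_indep_aw_family q_neq0).
apply: (is_basis_lin_indep (G := aw_family q c d N)) => k lt_kN.
exact: size_aw_family_leq.
Qed.
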